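(* Under the Standing setup, for every invocation $\textsc{MSSP}(I,H_I)$ occurring during the execution of $\textsc{MSSP}([0,k-1],G)$, no edge incident to a vertex of $V_\infty$ is contracted (i.e., no edge incident to a vertex of $V_\infty$ belongs to any tree $T(s)\in\mathcal T_J$ that is contracted to form $H_J$).
   Context: Standing setup. $G=(V,E)$ is a planar embedded directed graph (embedding given by a rotation system, i.e. the clockwise order of edges around each vertex) with non-negative edge weights (weight $\infty$ allowed), in which shortest paths are unique. The infinite face $f_\infty$ is a simple directed cycle all of whose edges have weight $\infty$; $V_\infty=\{r_0,\dots,r_{k-1}\}$ is its vertex set in clockwise order. It is assumed that no shortest path contains an edge entering a vertex of $V_\infty$, and that for every $r_i$ and every $u\in V\setminus V_\infty$ there is a path from $r_i$ to $u$ meeting $V_\infty$ only in $r_i$. For a graph $H$, $d_H(x,y)$ is the shortest-path distance and $P_H[x,y]$ the shortest path; for a rooted tree $T$ and vertex $v$ other than the root, $\pi_T(v)$ is the parent of $v$ in $T$. Contracting an edge set $E'$ (written $H/E'$) merges each connected component of $E'$ into one vertex (identified with a designated vertex of the component), deletes self-loops, and keeps only the cheapest edge among parallel edges; the rotation system is inherited. Procedure $\textsc{MSSP}(I=[i_1,i_2],H_I)$ (initial call $\textsc{MSSP}([0,k-1],G)$; the initial call is at recursion level $0$ and calls it makes are at level $h+1$ if it is at level $h$): let $i=\lfloor (i_1+i_2)/2\rfloor$. For each $m\in\{i_1,i,i_2\}$ compute and store the shortest-path tree $T_{I,m}$ from $r_m$ in $H_I[(V(H_I)\setminus V_\infty)\cup\{r_m\}]$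 (more generally, $T_{I,m}$ denotes this tree for any $m\in I$). If $i_2-i_1\le1$, stop. Otherwise, for each $J=[j_1,j_2]\in\{[i_1,i],[i,i_2]\}$: start with $H_J:=H_I$; let $E_{shared}=E(T_{I,j_1})\cap E(T_{I,j_2})$ (a forest). For each vertex $s$ with $\pi_{T_{I,j_1}}(s)\ne\pi_{T_{I,j_2}}(s)$, let $T(s)$ be the tree rooted at $s$ consisting of every edge $(s,v)\in E_{shared}$ such that $(s,v),(s,\pi_{T_{I,j_1}}(s)),(s,\pi_{T_{I,j_2}}(s))$ are in clockwise order around $s$, together with all edges of $E_{shared}$ descending from such $v$; let $\mathcal T_J$ be the collection of these (vertex-disjoint, maximal) trees. For each $T(s)\in\mathcal T_J$: for every $u\in T(s)$ record $s_J(u):=s$ and $\delta_J(u):=d_{T(s)}(s,u)$; for every edge $(u,v)$ of $H_J$ with exactly one endpoint in $T(s)$, if $u\in T(s)$ increase its weight by $\delta_J(u)$, and if $v\in T(s)\setminus\{s\}$ set its weight to $\infty$; then contract $T(s)$ to a single vertex identified with $s$. For vertices $u$ of $H_I$ in no tree of $\mathcal T_J$, set $s_J(u):=u$, $\delta_J(u):=0$. Then call $\textsc{MSSP}(J,H_J)$. *)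

From HB Require Import structures.
From mathcomp Require Import all_boot all_order all_algebra.
From mathcomp Require Import reals constructive_ereal.

Set Implicit Arguments.
Unset Strict Implicit.
Unset Printing Implicit Defensive.

Import Order.TTheory GRing.Theory Num.Theory.

(* Conventions:
   - vertices of G: a finType V; edges of G: a finType E with tail/head maps;
   - darts: E * bool; (e,true) is the out-dart of e at its tail,
     (e,false) the in-dart of e at its head; alpha flips a dart;
   - a rotation system is a map rot on darts: rot d = next dart clockwise
     around the vertex of d;
   - faces are the orbits of phi := rot \o alpha (faces traced with the face
     on the left; the outer face is then traversed clockwise);
   - weights live in \bar R, +oo meaning weight infinity.
   Contracted graphs keep the edge identities of G: a graph H_I is a "state"
   (current vertex set, current edge set, current endpoints, weights, rotation). *)

Section MSSPDefs.
Local Open Scope ereal_scope.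

Variables (R : realType) (V E : finType) (k : nat) (r : nat -> V).

Definition alpha (d : E * bool) : E * bool := (d.1, ~~ d.2).

Definition Vinf : {set V} := [set v | [exists i : 'I_k, r i == v]].

Record state := St {
  vs  : {set V};
  es  : {set E};
  etl : E -> V;
  ehd : E -> V;
  ew  : E -> \bar R;
  rot : E * bool -> E * bool
}.

Definition dvert (tl hd : E -> V) (d : E * bool) : V :=
  if d.2 then tl d.1 else hd d.1.

Fixpoint walk (F : {set E}) (tl hd : E -> V) (x : V) (p : seq E) (y : V)
  : bool :=
  match p with
  | [::] => x == y
  | e :: p' => [&& e \in F, tl e == x & walk F tl hd (hd e) p' y]
  end.

Definition is_path (F : {set E}) (tl hd : E -> V) x p y :=
  walk F tl hd x p y && uniq (x :: map hd p).

Definition wt (w : E -> \bar R) (p : seq E) : \bar R := \sum_(e <- p) w e.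

Definition shortest (F : {set E}) (tl hd : E -> V) (w : E -> \bar R)
  (x : V) (p : seq E) (y : V) : Prop :=
  [/\ is_path F tl hd x p y, wt w p \is a fin_num &
      forall q, walk F tl hd x q y -> wt w p <= wt w q].

Definition induced_edges (H : state) (W : {set V}) : {set E} :=
  [set e in es H | (etl H e \in W) && (ehd H e \in W)].

(* T is the shortest-path tree rooted at root in H[W]: an arborescence
   rooted at root, consisting of shortest paths, spanning exactly the
   vertices at finite distance from root in H[W]. *)
Definition is_spt (H : state) (W : {set V}) (root : V) (T : {set E}) : Prop :=
  let F := induced_edges H W in
  [/\ T \subset F,
      forall v, (#|[set e in T | ehd H e == v]| <= 1)%N,
      forall e, e \in T -> ehd H e != root,
      forall v, v \in W -> v != root ->
        ((exists2 e, e \in T & ehd H e = v) <->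
         (exists p, walk F (etl H) (ehd H) root p v /\ wt (ew H) p \is a fin_num))
    & forall e, e \in T ->
        exists p, walk T (etl H) (ehd H) root p (etl H e) /\
                  shortest F (etl H) (ehd H) (ew H) root (rcons p e) (ehd H e)].

Definition Wm (H : state) (m : nat) : {set V} := (vs H :\: Vinf) :|: [set r m].

Section Trees.
Variables (H : state) (T1 T2 : {set E}).

Definition shared (e : E) : bool := (e \in T1) && (e \in T2).

(* the tree edge entering v (its tail is the parent pi_T(v)) *)
Definition par (T : {set E}) (v : V) : option E := [pick e in T | ehd H e == v].

Definition cw (a b c : E * bool) : bool :=
  [&& fconnect (rot H) a b, fconnect (rot H) a c, a != b, a != c, b != c &
      findex (rot H) a b < findex (rot H) a c]%N.

Definition is_root (s : V) : bool :=
  match par T1 s, par T2 s with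
  | Some p1, Some p2 => etl H p1 != etl H p2
  | _, _ => false
  end.

Definition start_edge (s : V) (e : E) : bool :=
  shared e && (etl H e == s) &&
  match par T1 s, par T2 s with
  | Some p1, Some p2 =>
      (etl H p1 != etl H p2) && cw (e, true) (p1, false) (p2, false)
  | _, _ => false
  end.

Definition shrel : rel V :=
  fun x y => [exists e, [&& shared e, etl H e == x & ehd H e == y]].

Definition tree_edge (s : V) (e : E) : bool :=
  start_edge s e ||
  (shared e && [exists e0, start_edge s e0 && connect shrel (ehd H e0) (etl H e)]).

Definition in_tree (s u : V) : bool :=
  is_root s && ((u == s) || [exists e, tree_edge s e && (ehd H e == u)]).

Definition contracted : {set E} := [set e | [exists s, tree_edge s e]].

Definition rep (u : V) : V := if [pick s | in_tree s u] is Some s then s else u.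

Definition nonroot_in (u : V) : bool := [exists s, in_tree s u && (u != s)].

End Trees.

(* rotation system inherited after contracting the edges in C and deleting
   the other edges that are not in Es' (self-loops, discarded parallel edges):
   the next dart after d is found by walking from rot d, crossing contracted
   edges (rot \o alpha) and skipping deleted ones (rot). *)
Fixpoint skip (rt : E * bool -> E * bool) (C Es' : {set E}) (n : nat)
  (y : E * bool) : E * bool :=
  match n with
  | 0 => y
  | n'.+1 => if y.1 \in Es' then y
             else skip rt C Es' n' (if y.1 \in C then rt (alpha y) else rt y)
  end.

Definition inherited_rot (rt : E * bool -> E * bool) (C Es' : {set E})
  (d : E * bool) : E * bool :=
  if d.1 \in Es' then skip rt C Es' #|{: E * bool}| (rt d) else d.

(* H' is (a possible) H_J obtained from H = H_I with T1 = T_{I,j1},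
   T2 = T_{I,j2} *)
Definition step (H : state) (T1 T2 : {set E}) (H' : state) : Prop :=
  let C := contracted H T1 T2 in
  let it := in_tree H T1 T2 in
  let cand := fun e => [&& e \in es H, e \notin C &
                          rep H T1 T2 (etl H e) != rep H T1 T2 (ehd H e)] in
  [/\ vs H' = vs H :\: [set u | nonroot_in H T1 T2 u],
      (forall e, etl H' e = rep H T1 T2 (etl H e) /\
                 ehd H' e = rep H T1 T2 (ehd H e)),
      (exists delta : V -> \bar R,
         (forall s u, it s u ->
            exists p, walk [set e | tree_edge H T1 T2 s e] (etl H) (ehd H) s p u
                      /\ delta u = wt (ew H) p) /\
         (forall e, ew H' e =
            if [exists s, [&& it s (ehd H e), ehd H e != s & ~~ it s (etl H e)]]
            then +oo
            else ew H e +
                 (if [exists s, it s (etl H e) && ~~ it s (ehd H e)]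
                  then delta (etl H e) else 0))),
      [/\ (forall e, e \in es H' -> cand e),
          (forall e, cand e -> exists2 e', e' \in es H' &
             [/\ etl H' e' = etl H' e, ehd H' e' = ehd H' e & ew H' e' <= ew H' e])
        & forall e1 e2, e1 \in es H' -> e2 \in es H' ->
             etl H' e1 = etl H' e2 -> ehd H' e1 = ehd H' e2 -> e1 = e2]
    & rot H' = inherited_rot (rot H) C (es H')].

Definition child (i1 i2 j1 j2 : nat) : bool :=
  let i := (i1 + i2)./2 in
  ((j1 == i1) && (j2 == i)) || ((j1 == i) && (j2 == i2)).

(* invoked G0 i1 i2 H : the call MSSP([i1,i2], H) occurs during the
   execution of MSSP([0,k-1], G0) *)
Inductive invoked (G0 : state) : nat -> nat -> state -> Prop :=
| invoked_init : invoked G0 0 k.-1 G0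
| invoked_rec i1 i2 H j1 j2 T1 T2 H' :
    invoked G0 i1 i2 H -> (1 < i2 - i1)%N -> child i1 i2 j1 j2 ->
    is_spt H (Wm H j1) (r j1) T1 -> is_spt H (Wm H j2) (r j2) T2 ->
    step H T1 T2 H' -> invoked G0 j1 j2 H'.

End MSSPDefs.

From mathcomp Require Import all_boot all_order all_algebra.
From mathcomp Require Import reals constructive_ereal.
From mathcomp Require Import zify.
Import Order.TTheory GRing.Theory Num.Theory.

Set Implicit Arguments.
Unset Strict Implicit.
Unset Printing Implicit Defensive.

(* Both trees of a call lie in graphs whose only vertex of V_oo is their own
   root, r_j1 resp. r_j2; a contracted edge is shared by the two trees, so
   any endpoint of it in V_oo would equal both roots, and r_j1 <> r_j2
   because j1 < j2 < k. *)

Lemma half_addn_bounds i1 i2 : (1 < i2 - i1)%N -> (i1 < (i1 + i2)./2 < i2)%N.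
Proof.
move=> lt_i12; have := odd_double_half (i1 + i2); rewrite -muln2.
by case: (odd (i1 + i2)) => /=; lia.
Qed.

Lemma child_lt i1 i2 j1 j2 :
  (1 < i2 - i1)%N -> child i1 i2 j1 j2 -> (j1 < j2 <= i2)%N.
Proof.
move=> /half_addn_bounds mid_i.
by case/orP => /andP [/eqP -> /eqP ->]; lia.
Qed.

Section Invocations.
Variables (R : realType) (V E : finType) (k : nat) (r : nat -> V).

Lemma invoked_le (G0 : state R V E) i1 i2 H :
  invoked k r G0 i1 i2 H -> (i2 <= k.-1)%N.
Proof.
elim=> // a1 a2 H0 b1 b2 T1 T2 H' _ IH lt_a12 ch_ab _ _ _.
by have /andP [_ le_b2] := child_lt lt_a12 ch_ab; apply: leq_trans IH.
Qed.

Lemma mem_Wm_Vinf (H : state R V E) j v :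
  v \in Wm k r H j -> v \in Vinf k r -> v = r j.
Proof. by rewrite /Wm !inE => /orP [/andP [/negP + _]|/eqP ->]. Qed.

Lemma spt_edge_ends (H : state R V E) W root T e :
  is_spt H W root T -> e \in T -> etl H e \in W /\ ehd H e \in W.
Proof.
case=> sub_T _ _ _ _ /(subsetP sub_T).
by rewrite inE => /andP [_ /andP [-> ->]].
Qed.

Lemma contracted_sub (H : state R V E) T1 T2 :
  contracted H T1 T2 \subset T1 :&: T2.
Proof.
apply/subsetP => e; rewrite !inE => /existsP [s].
rewrite /tree_edge /start_edge /shared.
by case/orP => [/andP [/andP [/andP [-> ->] _] _]|/andP [/andP [-> ->] _]].
Qed.

Lemma Wm_Vinf_disjoint (H : state R V E) j1 j2 v :
  r j1 <> r j2 -> v \in Wm k r H j1 -> v \in Wm k r H j2 -> v \notin Vinf k r.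
Proof.
move=> neq_r W1v W2v; apply/negP => Vv.
by apply: neq_r; rewrite -(mem_Wm_Vinf W1v Vv) -(mem_Wm_Vinf W2v Vv).
Qed.

End Invocations.

Local Open Scope ereal_scope.

Theorem claim1
  (R : realType) (V E : finType) (tl hd : E -> V) (w : E -> \bar R)
  (sigma : E * bool -> E * bool) (k : nat) (r : nat -> V)
  (f : nat -> E * bool)
  (* weights are non-negative (possibly +oo) *)
  (Hw : forall e, 0 <= w e)
  (* sigma is a rotation system: a permutation of the darts whose cycles are
     exactly the sets of darts at each vertex (clockwise order) *)
  (Hsig_inj : injective sigma)
  (Hsig_v : forall d, dvert tl hd (sigma d) = dvert tl hd d)
  (Hsig_cyc : forall d d', dvert tl hd d = dvert tl hd d' -> fconnect sigma d d')
  (* the embedding is planar (Euler's formula, faces = orbits of sigma o alpha) *)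
  (Hplanar : (#|V| + fcard (fun d => sigma (alpha d)) {: E * bool} = #|E| + 2)%N)
  (* the infinite face f_oo is a simple directed cycle r_0 ... r_(k-1), in
     clockwise order, all of whose edges have weight +oo *)
  (Hk : (0 < k)%N)
  (Hr_inj : forall i j, (i < k)%N -> (j < k)%N -> r i = r j -> i = j)
  (Hf_face : forall i, (i < k)%N -> sigma (alpha (f i)) = f (i.+1 %% k)%N)
  (Hf_vert : forall i, (i < k)%N -> dvert tl hd (f i) = r i)
  (Hf_dir : exists b, forall i, (i < k)%N -> (f i).2 = b)
  (Hf_inf : forall i, (i < k)%N -> w (f i).1 = +oo)
  (* shortest paths are unique *)
  (Huniq : forall x y p q,
      shortest [set: E] tl hd w x p y -> shortest [set: E] tl hd w x q y -> p = q)
  (* no shortest path contains an edge entering a vertex of V_oo *)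
  (Hnoenter : forall x y p, shortest [set: E] tl hd w x p y ->
      forall e, e \in p -> hd e \notin Vinf k r)
  (* every u outside V_oo is reachable from every r_i by a path meeting
     V_oo only in r_i *)
  (Hreach : forall i u, (i < k)%N -> u \notin Vinf k r ->
      exists p, is_path [set: E] tl hd (r i) p u /\
                (forall e, e \in p -> hd e \in Vinf k r -> hd e = r i)) :
  let G0 := St [set: V] [set: E] tl hd w sigma in
  forall i1 i2 H, invoked k r G0 i1 i2 H ->
  (1 < i2 - i1)%N ->
  forall j1 j2 T1 T2, child i1 i2 j1 j2 ->
    is_spt H (Wm k r H j1) (r j1) T1 -> is_spt H (Wm k r H j2) (r j2) T2 ->
    forall e, e \in contracted H T1 T2 ->
      etl H e \notin Vinf k r /\ ehd H e \notin Vinf k r.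
Proof.
move=> G0 i1 i2 H inv_H lt_i12 j1 j2 T1 T2 ch_j spt1 spt2 e e_contr.
have /andP [lt_j12 le_j2] := child_lt lt_i12 ch_j.
have lt_j2k : (j2 < k)%N by have := invoked_le inv_H; lia.
have neq_r : r j1 <> r j2.
  have lt_j1k : (j1 < k)%N by lia.
  by move=> /(Hr_inj _ _ lt_j1k lt_j2k) eq_j; rewrite eq_j ltnn in lt_j12.
have /setIP [e_T1 e_T2] := subsetP (contracted_sub H T1 T2) e e_contr.
have [tl1 hd1] := spt_edge_ends spt1 e_T1.
have [tl2 hd2] := spt_edge_ends spt2 e_T2.
by split; apply: (@Wm_Vinf_disjoint R V E k r H j1 j2).
Qed.
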